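(* Let $a_0,a_1,a_2$ be real numbers and let $(F(n,k))_{n\ge 0,\,k\in\mathbb{Z}}$ be defined by $F(0,0)=1$, $F(n,k)=0$ whenever $k<0$ or $k>n$, and \[ F(n,k)=F(n-1,k-1)+(a_2n+a_1k+a_0)\,F(n-1,k)\qquad(n\ge1). \] Then for all integers $0\le k\le n$, \[ F(n,k)=\sum_{1\le p_1<p_2<\cdots<p_{n-k}\le n}\ \prod_{i=1}^{n-k}\big((a_2+a_1)p_i-a_1 i+a_0\big). \]
   Context: The sum runs over all strictly increasing sequences of $n-k$ integers in $\{1,\dots,n\}$; an empty product equals $1$. *)

From HB Require Import structures.
From mathcomp Require Import all_boot all_order all_algebra.
From mathcomp Require Import reals.
Set Implicit Arguments. Unset Strict Implicit. Unset Printing Implicit Defensive.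
Import Order.TTheory GRing.Theory Num.Theory.
Local Open Scope ring_scope.

Fixpoint F (R : realType) (a0 a1 a2 : R) (n : nat) (k : int) {struct n} : R :=
  match n with
  | 0%N => if k == 0%Z then 1 else 0
  | m.+1 => if (k < 0)%R || (m.+1%:Z < k)%R then 0
            else F a0 a1 a2 m (k - 1) +
                 (a2 * m.+1%:R + a1 * k%:~R + a0) * F a0 a1 a2 m k
  end.

From HB Require Import structures.
From mathcomp Require Import all_boot all_order all_algebra.
From mathcomp Require Import reals ring.

Set Implicit Arguments.
Unset Strict Implicit.
Unset Printing Implicit Defensive.

Import Order.TTheory GRing.Theory Num.Theory.

(* Let S(n, j) be the sum, over 1 <= p_1 < ... < p_j <= n, of the products
   prod_i c(p_i, i).  Splitting according to whether p_j = n gives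
   S(n, j) = S(n-1, j) + S(n-1, j-1) c(n, j).  For the weights
   c(p, i) = (a2 + a1) p - a1 i + a0 one has c(n, n-k) = a2 n + a1 k + a0,
   so S(n, n-k) satisfies the recurrence and initial values defining F(n, k). *)

Fixpoint incr_seqs (n j : nat) : seq (seq nat) :=
  match n, j with
  | _, 0 => [:: [::]]
  | 0, _.+1 => [::]
  | m.+1, i.+1 => incr_seqs m j ++ [seq rcons s m.+1 | s <- incr_seqs m i]
  end.

Lemma path_ltn_le_last x s : path ltn x s -> all (leq^~ (last x s)) (x :: s).
Proof.
elim: s x => [|y s IHs] x; first by rewrite /= leqnn.
rewrite /= => /andP[lt_xy /IHs]; rewrite /= => /andP[le_y ->].
by rewrite le_y (leq_trans (ltnW lt_xy) le_y).
Qed.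

Lemma mem_incr_seqs n j s :
  (s \in incr_seqs n j) = [&& size s == j, path ltn 0 s & last 0 s <= n].
Proof.
elim: n j s => [|n IHn] [|j] s.
- by case: s.
- case: s => [|[|x] s]; rewrite /= ?andbF //.
  case: (boolP (path ltn x.+1 s)) => [/path_ltn_le_last /andP[le_last _] | _].
    by rewrite leqNgt (leq_ltn_trans (leq0n x) le_last) andbF.
  by rewrite andbF.
- by case: s.
case/lastP: s => [|s x]; rewrite /= mem_cat IHn.
  by apply/negbTE/mapP=> -[[|? ?] _].
have -> : (rcons s x \in [seq rcons s' n.+1 | s' <- incr_seqs n j]) =
          (x == n.+1) && (rcons s x \in [seq rcons s' x | s' <- incr_seqs n j]).
  case: eqP => [->|ne_xn] //.
  by apply/mapP=> -[s' _ /(congr1 (last 0))]; rewrite !last_rcons.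
rewrite (mem_map (@rcons_injl _ x)) IHn size_rcons eqSS rcons_path !last_rcons.
rewrite (leq_eqVlt x n.+1) ltnS; case: (x =P n.+1) => [-> | _] /=.
  by rewrite ltnS ltnn !andbF /= andbT andbA.
by rewrite orbF.
Qed.

Lemma uniq_incr_seqs n j : uniq (incr_seqs n j).
Proof.
elim: n j => [|n IHn] [|j] //=.
rewrite cat_uniq IHn (map_inj_uniq (@rcons_injl _ n.+1)) IHn andbT /=.
apply/hasP=> -[_ /mapP[s _ ->]].
by rewrite mem_incr_seqs last_rcons ltnn !andbF.
Qed.

Lemma incr_seqs_oversize n j : n < j -> incr_seqs n j = [::].
Proof.
elim: n j => [|n IHn] [|j] // lt_nj /=.
by rewrite !IHn // ltnW.
Qed.

Lemma sum_incr_tuples (V : nmodType) (G : seq nat -> V) n j :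
  (\sum_(t : j.-tuple 'I_n.+1 | path ltn 0%N (map val t)) G (map val t) =
   \sum_(s <- incr_seqs n j) G s)%R.
Proof.
rewrite -big_filter -(big_map (fun t : j.-tuple 'I_n.+1 => map val t) xpredT).
apply/perm_big/uniq_perm.
- by rewrite map_inj_uniq ?filter_uniq ?index_enum_uniq // => t u /(inj_map val_inj)/val_inj.
- exact: uniq_incr_seqs.
move=> s; rewrite mem_incr_seqs; apply/mapP/idP.
  move=> [t]; rewrite mem_filter => /andP[path_t _] ->.
  by rewrite size_map size_tuple eqxx path_t -[0]/(val (@ord0 n)) last_map -ltnS ltn_ord.
case/and3P=> /eqP size_s path_s le_last.
have le_s : all (leq^~ n) s.
  have /allP le_last_s := path_ltn_le_last path_s.
  apply/allP=> x x_s; apply: (leq_trans _ le_last).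
  by apply: le_last_s; rewrite in_cons x_s orbT.
have val_inord : map val (map (@inord n) s) = s.
  rewrite -map_comp map_id_in // => x /(allP le_s) le_xn /=; exact: inordK.
have size_t : size (map (@inord n) s) == j by rewrite size_map size_s.
by exists (Tuple size_t); rewrite ?mem_filter ?mem_index_enum /= val_inord ?path_s.
Qed.

Local Open Scope ring_scope.

Section IncrSum.
Variables (R : pzSemiRingType) (c : nat -> nat -> R).

Definition incr_weight (s : seq nat) : R := \prod_(i < size s) c (nth 0 s i) i.+1.

Definition incr_sum n j : R := \sum_(s <- incr_seqs n j) incr_weight s.

Lemma incr_weight_rcons s x : incr_weight (rcons s x) = incr_weight s * c x (size s).+1.
Proof.
rewrite /incr_weight size_rcons big_ord_recr /= nth_rcons ltnn eqxx.
by congr (_ * _); apply: eq_bigr => i _; rewrite nth_rcons ltn_ord.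
Qed.

Lemma incr_weight_tuple j (t : j.-tuple nat) :
  incr_weight t = \prod_(i < j) c (tnth t i) i.+1.
Proof. by rewrite /incr_weight size_tuple; apply: eq_bigr => i _; rewrite (tnth_nth 0). Qed.

Lemma incr_sum0 n : incr_sum n 0 = 1.
Proof. by case: n => [|n]; rewrite /incr_sum big_seq1 /incr_weight big_ord0. Qed.

Lemma incr_sum_oversize n j : (n < j)%N -> incr_sum n j = 0.
Proof. by move=> /incr_seqs_oversize; rewrite /incr_sum => ->; rewrite big_nil. Qed.

Lemma incr_sumSS n j :
  incr_sum n.+1 j.+1 = incr_sum n j.+1 + incr_sum n j * c n.+1 j.+1.
Proof.
rewrite /incr_sum /= big_cat big_map big_distrl /=; congr (_ + _).
rewrite !big_seq; apply: eq_bigr => s; rewrite mem_incr_seqs => /andP[/eqP size_s _].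
by rewrite incr_weight_rcons size_s.
Qed.

End IncrSum.

Section FIncrSum.
Variables (R : realType) (a0 a1 a2 : R).

Definition F_weight (p i : nat) : R := (a2 + a1) * p%:R - a1 * i%:R + a0.

Lemma F_weight_complement n k :
  (k <= n)%N -> F_weight n (n - k) = a2 * n%:R + a1 * k%:R + a0.
Proof. by move=> le_kn; rewrite /F_weight natrB //; ring. Qed.

Lemma F_oversize m k : (m < k)%N -> F a0 a1 a2 m k%:Z = 0.
Proof. by case: m => [|m] lt_mk /=; [case: k lt_mk | rewrite ltz_nat lt_mk]. Qed.

Lemma F_recurrence n k : (k <= n.+1)%N ->
  F a0 a1 a2 n.+1 k%:Z =
  F a0 a1 a2 n (k%:Z - 1) + (a2 * n.+1%:R + a1 * k%:R + a0) * F a0 a1 a2 n k%:Z.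
Proof. by move=> le_kn /=; rewrite ltz_nat ltnNge le_kn. Qed.

Lemma F_incr_sum n k : (k <= n)%N -> F a0 a1 a2 n k%:Z = incr_sum F_weight n (n - k).
Proof.
elim: n k => [|n IHn] k le_kn; first by move: le_kn; rewrite leqn0 => /eqP ->; rewrite incr_sum0.
rewrite F_recurrence // -F_weight_complement //.
case: k le_kn => [_ | k le_kn].
  have F_neg : F a0 a1 a2 n (0%:Z - 1) = 0 by case: n {IHn}.
  by rewrite F_neg IHn // !subn0 incr_sumSS (incr_sum_oversize _ (ltnSn n)) !add0r mulrC.
have -> : k.+1%:Z - 1 = k%:Z by rewrite -addn1 PoszD addrK.
rewrite subSS IHn //; move: le_kn; rewrite ltnS leq_eqVlt => /orP[/eqP-> | lt_kn].
  by rewrite F_oversize // mulr0 addr0 subnn !incr_sum0.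
by rewrite IHn // -(subnSK lt_kn) incr_sumSS mulrC.
Qed.

End FIncrSum.

Theorem mainTheorem2 (R : realType) (a0 a1 a2 : R) (n k : nat) :
  (k <= n)%N ->
  F a0 a1 a2 n k%:Z =
  \sum_(t : (n - k).-tuple 'I_n.+1 |
          sorted ltn [seq val x | x <- t] && all (fun x : 'I_n.+1 => 0 < val x)%N t)
     \prod_(i < n - k)
        ((a2 + a1) * (val (tnth t i))%:R - a1 * (i.+1)%:R + a0).
Proof.
move=> le_kn; rewrite F_incr_sum // /incr_sum -sum_incr_tuples.
apply: eq_big => [t | t _].
  by rewrite path_sortedE ?all_map 1?andbC //; apply: ltn_trans.
rewrite (incr_weight_tuple _ (map_tuple val t)).
by apply: eq_bigr => i _; rewrite tnth_map.
Qed.
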